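(* The operator $\mathbf{V}\mapsto\mathbf{V}^{\mathsf{bar}}$ on the lattice of pseudovarieties of finite semigroups is continuous (order preserving and preserving directed joins), non-decreasing ($\mathbf{V}\subseteq\mathbf{V}^{\mathsf{bar}}$) and idempotent ($(\mathbf{V}^{\mathsf{bar}})^{\mathsf{bar}}=\mathbf{V}^{\mathsf{bar}}$). Further: (i) $\llbracket S\rrbracket^{\mathsf{bar}}=\llbracket S^{\mathsf{bar}}\rrbracket$ for every finite semigroup $S$; (ii) $\mathbf{RZ}\subseteq\mathbf{V}^{\mathsf{bar}}$ for every nontrivial pseudovariety $\mathbf{V}$. Consequently, if $\llbracket S\rrbracket=\llbracket T\rrbracket$ then $\llbracket S^{\mathsf{bar}}\rrbracket=\llbracket T^{\mathsf{bar}}\rrbracket$.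
   Context: All semigroups are finite. A pseudovariety is a class of finite semigroups closed under finite direct products, subsemigroups and homomorphic images; $\llbracket\mathscr{K}\rrbracket$ is the pseudovariety generated by a class $\mathscr{K}$. $\mathbf{RZ}$ is the pseudovariety of right zero semigroups ($xy=y$). For a semigroup $S$, $S^\bullet=S$ if $S$ is a monoid and $S^\bullet=S^I$ (external identity adjoined) otherwise; $S^{\mathsf{bar}}$ is the semigroup of transformations of $S^\bullet$ (acting on the right) consisting of right multiplications by elements of $S$ together with all constant maps on $S^\bullet$. For a pseudovariety $\mathbf{V}$, $\mathbf{V}^{\mathsf{bar}}=\llbracket S^{\mathsf{bar}}\mid S\in\mathbf{V}\rrbracket$. *)

From HB Require Import structures.
From mathcomp Require Import all_boot.

Set Implicit Arguments.
Unset Strict Implicit.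
Unset Printing Implicit Defensive.

Record fsemigroup := FSemigroup {
  carrier :> finType;
  sop : carrier -> carrier -> carrier;
  sopA : associative sop;
  carrier_nonempty : (0 < #|carrier|)%N }.

Definition is_hom (S T : fsemigroup) (f : S -> T) : Prop :=
  forall x y : S, f (sop x y) = sop (f x) (f y).

Definition divides_sub (S T : fsemigroup) : Prop :=
  exists f : S -> T, is_hom f /\ injective f.

Definition hom_image (S T : fsemigroup) : Prop :=
  exists f : T -> S, is_hom f /\ (forall y : S, exists x : T, f x = y).

Section Prod.
Variables S T : fsemigroup.
Definition prod_op (x y : S * T) : S * T := (sop x.1 y.1, sop x.2 y.2).
Lemma prod_opA : associative prod_op.
Proof. by move=> [a b] [c d] [e f]; rewrite /prod_op /= !sopA. Qed.
Lemma prod_nonempty : (0 < #|{: S * T}|)%N.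
Proof. by rewrite card_prod muln_gt0 !carrier_nonempty. Qed.
Definition prod_sg : fsemigroup := FSemigroup prod_opA prod_nonempty.
End Prod.

Definition unit_op (x y : unit) : unit := tt.
Lemma unit_opA : associative unit_op. Proof. by []. Qed.
Lemma unit_nonempty : (0 < #|{: unit}|)%N. Proof. by rewrite card_unit. Qed.
Definition trivial_sg : fsemigroup := FSemigroup unit_opA unit_nonempty.

Definition sgclass := fsemigroup -> Prop.

Definition csub (V W : sgclass) : Prop := forall S, V S -> W S.
Definition ceq (V W : sgclass) : Prop := csub V W /\ csub W V.

(* closed under finite direct products (the empty product being the
   trivial semigroup), subsemigroups and homomorphic images *)
Definition pseudovariety (V : sgclass) : Prop :=
  [/\ V trivial_sg,
      (forall S T, V S -> V T -> V (prod_sg S T)),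
      (forall S T, divides_sub S T -> V T -> V S) &
      (forall S T, hom_image S T -> V T -> V S)].

Definition gen (K : sgclass) : sgclass :=
  fun S => forall V, pseudovariety V -> csub K V -> V S.

Definition gen1 (S : fsemigroup) : sgclass := gen (fun T => T = S).

Definition cjoin (I : Type) (F : I -> sgclass) : sgclass :=
  gen (fun S => exists i, F i S).

Definition RZ : sgclass := fun S => forall x y : S, sop x y = y.

Definition nontrivial (V : sgclass) : Prop :=
  exists S, V S /\ (1 < #|S|)%N.

Definition monoidb (S : fsemigroup) : bool :=
  [exists e : S, [forall x : S, (sop e x == x) && (sop x e == x)]].

(* S^bullet: S itself if S is a monoid, else S with an external identity
   adjoined (None plays the role of I) *)
Definition Sdot (S : fsemigroup) : finType :=
  if monoidb S then (S : finType) else Finite.clone (option S) _.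

Definition ract (S : fsemigroup) : Sdot S -> S -> Sdot S :=
  match monoidb S as b
    return (if b then (S : finType) else Finite.clone (option S) _) -> S ->
           (if b then (S : finType) else Finite.clone (option S) _) with
  | true => fun x s => sop x s
  | false => fun x s => match x with None => Some s | Some y => Some (sop y s) end
  end.

Lemma ractA (S : fsemigroup) (x : Sdot S) (s t : S) :
  ract (ract x s) t = ract x (sop s t).
Proof.
move: x; rewrite /Sdot /ract; case: (monoidb S) => x; first by rewrite sopA.
by case: x => [y|] //=; rewrite sopA.
Qed.

Definition is_bar (S : fsemigroup) (f : {ffun Sdot S -> Sdot S}) : bool :=
  [exists s : S, f == [ffun x => ract x s]] ||
  [exists y : Sdot S, f == [ffun _ => y]].

(* composition, maps acting on the right: x (f g) = (x f) g *)
Definition rcomp (S : fsemigroup) (f g : {ffun Sdot S -> Sdot S}) :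
  {ffun Sdot S -> Sdot S} := [ffun x => g (f x)].

Lemma is_bar_comp (S : fsemigroup) (f g : {ffun Sdot S -> Sdot S}) :
  is_bar f -> is_bar g -> is_bar (rcomp f g).
Proof.
move=> /orP[/existsP[s /eqP->]|/existsP[y /eqP->]]
       /orP[/existsP[t /eqP->]|/existsP[z /eqP->]].
- apply/orP; left; apply/existsP; exists (sop s t); apply/eqP/ffunP=> x.
  by rewrite !ffunE ractA.
- apply/orP; right; apply/existsP; exists z; apply/eqP/ffunP=> x.
  by rewrite !ffunE.
- apply/orP; right; apply/existsP; exists (ract y t); apply/eqP/ffunP=> x.
  by rewrite !ffunE.
- apply/orP; right; apply/existsP; exists z; apply/eqP/ffunP=> x.
  by rewrite !ffunE.
Qed.

Definition bar_type (S : fsemigroup) : finType :=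
  Finite.clone {f : {ffun Sdot S -> Sdot S} | is_bar f} _.

Definition bar_op (S : fsemigroup) (f g : bar_type S) : bar_type S :=
  exist _ (rcomp (sval f) (sval g)) (is_bar_comp (svalP f) (svalP g)).

Lemma bar_opA (S : fsemigroup) : associative (@bar_op S).
Proof.
move=> f g h; apply: val_inj; apply/ffunP=> x.
by rewrite /= /rcomp !ffunE.
Qed.

Lemma bar_nonempty (S : fsemigroup) : (0 < #|bar_type S|)%N.
Proof.
have /card_gt0P[s _] := carrier_nonempty S.
have Hb : is_bar [ffun x : Sdot S => ract x s].
  by apply/orP; left; apply/existsP; exists s.
by apply/card_gt0P; exists (exist (fun f => is_bar f) _ Hb).
Qed.

Definition bar (S : fsemigroup) : fsemigroup :=
  FSemigroup (@bar_opA S) (bar_nonempty S).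

Definition barV (V : sgclass) : sgclass :=
  gen (fun T => exists S, V S /\ T = bar S).

From mathcomp Require Import all_boot.

Set Implicit Arguments.
Unset Strict Implicit.
Unset Printing Implicit Defensive.

(* Every closure property of a pseudovariety is transported along S |-> S^bar.
   If S divides T, then T^bar acts on T^bullet and this action covers the
   action of S^bar on S^bullet (division of transformation semigroups), so
   S^bar divides T^bar; likewise (S1 x S2)^bar divides S1^bar x S2^bar, and
   S^bar^bar divides a power of S^bar, acting pointwise on the maps of
   S^bullet.  Hence S |-> W (S^bar) is a pseudovariety whenever W is, which
   gives (i) and idempotency.  Right translations embed S into S^bar, and a
   right zero semigroup R embeds into (S^bar)^R through two distinct constant
   maps as soon as S has two elements. *)

Lemma pseudovariety_gen (K : sgclass) : pseudovariety (gen K).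
Proof.
split=> [V [] // | S T KS KT V pV KV | S T ST KT V pV KV | S T ST KT V pV KV];
  case: (pV) => _ Vprod Vsub Vhom.
- exact: Vprod (KS V pV KV) (KT V pV KV).
- exact: Vsub ST (KT V pV KV).
- exact: Vhom ST (KT V pV KV).
Qed.

Lemma csub_gen (K : sgclass) : csub K (gen K).
Proof. by move=> S KS V _; apply. Qed.

Lemma gen_least (K V : sgclass) : pseudovariety V -> csub K V -> csub (gen K) V.
Proof. by move=> pV KV S; apply. Qed.

Definition some_elem (S : fsemigroup) : S := xchoose (card_gt0P (carrier_nonempty S)).

Definition is_identity (S : fsemigroup) (e : S) : Prop :=
  forall x, sop e x = x /\ sop x e = x.

(* Eilenberg's division: [R] is a functional, surjective relational morphism,
   i.e. [S] is a homomorphic image of a subsemigroup of [T]. *)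
Definition division (S T : fsemigroup) (R : T -> S -> bool) : Prop :=
  [/\ forall u v s t, R u s -> R v t -> R (sop u v) (sop s t),
      forall u s s', R u s -> R u s' -> s = s' &
      forall s, exists u, R u s].

Definition divides (S T : fsemigroup) : Prop := exists R : T -> S -> bool, division R.

Section Subsemigroup.
Variables (T : fsemigroup) (P : pred T).
Hypothesis P_mul : forall u v, P u -> P v -> P (sop u v).
Hypothesis P_nonempty : exists u, P u.

Definition subsg_op (u v : {u | P u}) : {u | P u} :=
  exist _ (sop (val u) (val v)) (P_mul (valP u) (valP v)).

Lemma subsg_opA : associative subsg_op.
Proof. by move=> u v w; apply: val_inj; apply: sopA. Qed.

Lemma subsg_nonempty : 0 < #|{: {u | P u}}|.
Proof. by case: P_nonempty => u Pu; apply/card_gt0P; exists (exist _ u Pu). Qed.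

Definition subsg : fsemigroup := FSemigroup subsg_opA subsg_nonempty.

Lemma subsg_divides_sub : divides_sub subsg T.
Proof. by exists val; split=> [//|]; apply: val_inj. Qed.

End Subsemigroup.

Section PseudovarietyClosure.
Variable V : sgclass.
Hypothesis pV : pseudovariety V.

Lemma pv_prod S T : V S -> V T -> V (prod_sg S T).
Proof. by case: pV => _ Vprod _ _; apply: Vprod. Qed.

Lemma pv_sub S T : divides_sub S T -> V T -> V S.
Proof. by case: pV => _ _ Vsub _; apply: Vsub. Qed.

Lemma pv_hom S T : hom_image S T -> V T -> V S.
Proof. by case: pV => _ _ _ Vhom; apply: Vhom. Qed.

Lemma pv_subsingleton (S : fsemigroup) : (forall x y : S, x = y) -> V S.
Proof.
move=> S1; case: (pV) => Vtriv _ _ _; apply: pv_hom Vtriv.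
by exists (fun=> some_elem S); split=> [x y | y]; [|exists tt]; apply: S1.
Qed.

Lemma pv_divides S T : divides S T -> V T -> V S.
Proof.
case=> R [R_mul R_fun R_surj] VT.
pose P u := [exists s, R u s].
have P_mul u v : P u -> P v -> P (sop u v).
  by move=> /existsP[s Rus] /existsP[t Rvt]; apply/existsP; exists (sop s t); apply: R_mul.
have P_nonempty : exists u, P u.
  by have [u Ru] := R_surj (some_elem S); exists u; apply/existsP; exists (some_elem S).
pose U := subsg P_mul P_nonempty.
have VU : V U := pv_sub (subsg_divides_sub P_mul P_nonempty) VT.
pose h (u : U) : S := xchoose (existsP (valP u)).
have R_h (u : U) : R (val u) (h u) := xchooseP (existsP (valP u)).
apply: pv_hom VU; exists h; split=> [x y | s].
- by apply: R_fun (R_h (sop x y)) _; apply: R_mul (R_h x) (R_h y).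
- have [u Rus] := R_surj s.
  have Pu : P u by apply/existsP; exists s.
  by exists (exist _ u Pu : U); apply: R_fun (R_h (exist _ u Pu)) Rus.
Qed.

End PseudovarietyClosure.

Lemma divides_sub_divides (S T : fsemigroup) : divides_sub S T -> divides S T.
Proof.
case=> f [f_hom f_inj]; exists (fun u s => u == f s).
split=> [u v s t /eqP-> /eqP-> | u s s' /eqP-> /eqP /f_inj // | s].
- by rewrite f_hom.
- by exists (f s).
Qed.

Lemma hom_image_divides (S T : fsemigroup) : hom_image S T -> divides S T.
Proof.
case=> f [f_hom f_surj]; exists (fun u s => f u == s).
split=> [u v s t /eqP<- /eqP<- | u s s' /eqP<- /eqP // | s].
- by rewrite f_hom.
- by have [u fu] := f_surj s; exists u; apply/eqP.
Qed.

Lemma division_identity (S T : fsemigroup) (R : T -> S -> bool) u s :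
  division R -> R u s -> is_identity u -> is_identity s.
Proof.
case=> R_mul R_fun R_surj Rus u_id s'; have [v Rvs'] := R_surj s'.
have [uv vu] := u_id v.
have := R_mul _ _ _ _ Rus Rvs'; have := R_mul _ _ _ _ Rvs' Rus; rewrite uv vu.
by move=> Rvs's Rvss'; split; [exact: R_fun Rvss' Rvs' | exact: R_fun Rvs's Rvs'].
Qed.

Section AdjoinedIdentity.
Variable S : fsemigroup.

Lemma identityP (e : S) :
  reflect (is_identity e) [forall x, (sop e x == x) && (sop x e == x)].
Proof.
apply: (iffP forallP) => [e_id x | e_id x]; last by have [-> ->] := e_id x; rewrite !eqxx.
by have /andP[/eqP-> /eqP->] := e_id x.
Qed.

Lemma monoidP : reflect (exists e : S, is_identity e) (monoidb S).
Proof. by apply: (iffP existsP) => -[e /identityP]; exists e. Qed.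

Lemma identity_unique (e e' : S) : is_identity e -> is_identity e' -> e = e'.
Proof. by move=> e_id e'_id; have [<- _] := e'_id e; have [_ ->] := e_id e'. Qed.

Definition to_dot : S -> Sdot S :=
  match monoidb S as b
    return S -> (if b then (S : finType) else Finite.clone (option S) _) with
  | true => id
  | false => Some
  end.

Definition dot1 : Sdot S :=
  match monoidb S as b
    return (if b then (S : finType) else Finite.clone (option S) _) with
  | true => odflt (some_elem S) [pick e | [forall x, (sop e x == x) && (sop x e == x)]]
  | false => None
  end.

Lemma to_dot_inj : injective to_dot.
Proof. by rewrite /to_dot /Sdot; case: (monoidb S) => x y // []. Qed.

Lemma ract_to_dot (x s : S) : ract (to_dot x) s = to_dot (sop x s).
Proof. by rewrite /to_dot /ract /Sdot; case: (monoidb S). Qed.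

Lemma Sdot_cases (y : Sdot S) : y = dot1 \/ exists x, y = to_dot x.
Proof.
move: y; rewrite /dot1 /to_dot /Sdot.
by case: (monoidb S) => [y | [x|]]; [right; exists y | right; exists x | left].
Qed.

Lemma dot1_to_dot (e : S) : (dot1 = to_dot e) <-> is_identity e.
Proof.
rewrite /dot1 /to_dot /Sdot; case: monoidP => [[e' e'_id] | no_id]; last first.
  by split=> // e_id; case: no_id; exists e.
case: pickP => [e'' /identityP e''_id | /(_ e') /identityP //] /=.
by split=> [<- // | e_id]; apply: identity_unique.
Qed.

Lemma ract_dot1 (s : S) : ract dot1 s = to_dot s.
Proof.
rewrite /dot1 /ract /to_dot /Sdot; case: monoidP => [[e e_id] | //] /=.
by case: pickP => [e' /identityP e'_id | /(_ e) /identityP //]; have [] := e'_id s.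
Qed.

End AdjoinedIdentity.

Section BarElements.
Variable S : fsemigroup.

Lemma is_bar_rho (s : S) : is_bar [ffun x => ract x s].
Proof. by apply/orP; left; apply/existsP; exists s. Qed.

Lemma is_bar_cst (y : Sdot S) : is_bar [ffun=> y].
Proof. by apply/orP; right; apply/existsP; exists y. Qed.

Definition rho (s : S) : bar S := exist (@is_bar S) _ (is_bar_rho s).
Definition cst (y : Sdot S) : bar S := exist (@is_bar S) _ (is_bar_cst y).

Lemma bar_inj (f g : bar S) : val f =1 val g -> f = g.
Proof. by move=> fg; apply: val_inj; apply/ffunP. Qed.

Lemma bar_mulE (f g : bar S) x : val (sop f g) x = val g (val f x).
Proof. by rewrite /= /rcomp ffunE. Qed.

Lemma rhoE s x : val (rho s) x = ract x s. Proof. by rewrite ffunE. Qed.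

Lemma cstE y x : val (cst y) x = y. Proof. by rewrite ffunE. Qed.

Lemma bar_cases (f : bar S) : (exists s, f = rho s) \/ (exists y, f = cst y).
Proof.
case/orP: (valP f) => [/existsP[s /eqP fs] | /existsP[y /eqP fy]].
  by left; exists s; apply: val_inj.
by right; exists y; apply: val_inj.
Qed.

Lemma mul_cst (f : bar S) y : sop f (cst y) = cst y.
Proof. by apply: bar_inj => x; rewrite bar_mulE !cstE. Qed.

End BarElements.

(* Division of transformation semigroups: [r] identifies part of [Y] with [S]
   and [y0] stands for the adjoined identity, so that [covers] maps part of [Y]
   onto [Sdot S]; every right translation and every constant map of [Sdot S] is
   then the trace of the action of some element of [U]. *)
Section BarRealization.
Variables (S U : fsemigroup) (Y : finType) (act : Y -> U -> Y) (y0 : Y) (r : Y -> S -> bool).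
Hypothesis actM : forall y u v, act y (sop u v) = act (act y u) v.
Hypothesis r_fun : forall y s s', r y s -> r y s' -> s = s'.
Hypothesis r_surj : forall s, exists y, r y s.
Hypothesis r_base : forall s, r y0 s -> is_identity s.
Hypothesis rho_realized :
  forall s, exists u, r (act y0 u) s /\ forall y t, r y t -> r (act y u) (sop t s).
Hypothesis cst_realized : forall y', exists u, forall y, act y u = y'.

Definition covers (y : Y) (x : Sdot S) : bool :=
  (x == dot1 S) && (y == y0) || [exists s, (x == to_dot s) && r y s].

Lemma covers_fun y x x' : covers y x -> covers y x' -> x = x'.
Proof.
have base_dot1 s : r y0 s -> to_dot s = dot1 S by move/r_base/dot1_to_dot.
move=> /orP[/andP[/eqP-> /eqP->] | /existsP[s /andP[/eqP-> rys]]]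
       /orP[/andP[/eqP-> /eqP yy0] | /existsP[s' /andP[/eqP-> rys']]].
- by [].
- by rewrite base_dot1.
- by rewrite base_dot1 // -yy0.
- by rewrite (r_fun rys rys').
Qed.

Lemma covers_to_dot y s : r y s -> covers y (to_dot s).
Proof. by move=> rys; apply/orP; right; apply/existsP; exists s; rewrite eqxx. Qed.

Lemma covers_surj x : exists y, covers y x.
Proof.
case: (Sdot_cases x) => [-> | [s ->]]; first by exists y0; rewrite /covers !eqxx.
by have [y rys] := r_surj s; exists y; apply: covers_to_dot.
Qed.

Lemma bar_divides_of_realization : divides (bar S) U.
Proof.
pose R u (f : bar S) := [forall y, forall x, covers y x ==> covers (act y u) (val f x)].
have RP u (f : bar S) :
    reflect (forall y x, covers y x -> covers (act y u) (val f x)) (R u f).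
  apply: (iffP forallP) => [Ruf y x | Ruf y]; first exact/implyP/(forallP (Ruf y)).
  by apply/forallP=> x; apply/implyP/Ruf.
exists R; split.
- move=> u v f g /RP Ruf /RP Rvg; apply/RP=> y x cyx.
  by rewrite actM bar_mulE; apply/Rvg/Ruf.
- move=> u f g /RP Ruf /RP Rug; apply: bar_inj => x.
  by have [y cyx] := covers_surj x; apply: covers_fun (Ruf _ _ cyx) (Rug _ _ cyx).
- move=> f; case: (bar_cases f) => [[s ->] | [z ->]].
    have [u [ry0us rus]] := rho_realized s; exists u; apply/RP=> y x.
    rewrite rhoE => /orP[/andP[/eqP-> /eqP->] | /existsP[t /andP[/eqP-> ryt]]].
      by rewrite ract_dot1; apply: covers_to_dot.
    by rewrite ract_to_dot; apply/covers_to_dot/rus.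
  have [y' cy'z] := covers_surj z; have [u act_u] := cst_realized y'.
  by exists u; apply/RP=> y x _; rewrite act_u cstE.
Qed.

End BarRealization.

Lemma bar_divides (S T : fsemigroup) : divides S T -> divides (bar S) (bar T).
Proof.
case=> tau tau_div; case: (tau_div) => tau_mul tau_fun tau_surj.
pose r (y : Sdot T) s := [exists t, (y == to_dot t) && tau t s].
have rP y t s : y = to_dot t -> tau t s -> r y s.
  by move=> -> ts; apply/existsP; exists t; rewrite eqxx.
apply: (@bar_divides_of_realization S (bar T) (Sdot T) (fun y (g : bar T) => val g y)
  (dot1 T) r).
- by move=> y g h; rewrite bar_mulE.
- move=> y s s' /existsP[t /andP[/eqP-> ts]] /existsP[t' /andP[/eqP/to_dot_inj tt' t's]].
  by apply: tau_fun ts _; rewrite tt'.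
- by move=> s; have [t ts] := tau_surj s; exists (to_dot t); apply: rP ts.
- move=> s /existsP[t /andP[/eqP/dot1_to_dot t_id ts]].
  exact: division_identity tau_div ts t_id.
- move=> s; have [t ts] := tau_surj s; exists (rho t); split.
    by rewrite rhoE ract_dot1; apply: rP ts.
  move=> y s' /existsP[t' /andP[/eqP-> t's']]; rewrite rhoE ract_to_dot.
  by apply: rP (tau_mul _ _ _ _ t's' ts).
- by move=> y'; exists (cst y') => y; apply: cstE.
Qed.

Lemma bar_prod_divides (S1 S2 : fsemigroup) :
  divides (bar (prod_sg S1 S2)) (prod_sg (bar S1) (bar S2)).
Proof.
pose lift (s : prod_sg S1 S2) : Sdot S1 * Sdot S2 := (to_dot s.1, to_dot s.2).
apply: (@bar_divides_of_realization (prod_sg S1 S2) (prod_sg (bar S1) (bar S2))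
  (Sdot S1 * Sdot S2)%type (fun y u => (val u.1 y.1, val u.2 y.2))
  (dot1 S1, dot1 S2) (fun y s => y == lift s)).
- by move=> y u v; rewrite /= !bar_mulE.
- move=> y s s' /eqP-> /eqP[/to_dot_inj e1 /to_dot_inj e2].
  by case: s s' e1 e2 => a b [a' b'] /= -> ->.
- by move=> s; exists (lift s).
- move=> [a b] /eqP[/dot1_to_dot a_id /dot1_to_dot b_id] [x1 x2].
  have [ax xa] := a_id x1; have [bx xb] := b_id x2.
  by rewrite /= /prod_op /= ax xa bx xb.
- move=> s; exists ((rho s.1, rho s.2) : prod_sg _ _); split.
    by rewrite /= !rhoE !ract_dot1.
  by move=> y t /eqP->; rewrite /= !rhoE !ract_to_dot.
- move=> y'; exists ((cst y'.1, cst y'.2) : prod_sg _ _) => y.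
  by rewrite !cstE; case: y'.
Qed.

Section Power.
Variables (I : finType) (S : fsemigroup).

Definition pow_op (f g : {ffun I -> S}) : {ffun I -> S} := [ffun i => sop (f i) (g i)].

Lemma pow_opA : associative pow_op.
Proof. by move=> f g h; apply/ffunP=> i; rewrite !ffunE sopA. Qed.

Lemma pow_nonempty : 0 < #|{: {ffun I -> S}}|.
Proof. by apply/card_gt0P; exists [ffun=> some_elem S]. Qed.

Definition pow_sg : fsemigroup := FSemigroup pow_opA pow_nonempty.

Lemma pow_mulE (f g : pow_sg) i : (sop f g : {ffun I -> S}) i = sop (f i) (g i).
Proof. exact: ffunE. Qed.

End Power.

Lemma pv_pow (V : sgclass) (S : fsemigroup) (I : finType) :
  pseudovariety V -> V S -> V (pow_sg I S).
Proof.
move=> pV VS; move cardI: #|I| => n; elim: n I cardI => [|n IHn] I cardI.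
  by apply: (pv_subsingleton pV) => f g; apply/ffunP=> i; have := card0_eq cardI i.
have /card_gt0P[i0 _] : 0 < #|I| by rewrite cardI.
pose I' := {i : I | i != i0}.
have VI' : V (pow_sg I' S) by apply: IHn; rewrite card_sig cardC1 cardI.
apply: (pv_hom pV) (pv_prod pV VS VI').
exists (fun p : prod_sg S (pow_sg I' S) =>
  [ffun i => if insub i is Some j then p.2 j else p.1] : pow_sg I S); split.
- move=> [a g] [b h]; apply/ffunP=> i; rewrite pow_mulE !ffunE /=.
  by case: insubP => [j _ _ | _]; rewrite ?pow_mulE.
- move=> g; exists (g i0, [ffun j : I' => g (val j)]); apply/ffunP=> i; rewrite !ffunE /=.
  by case: insubP => [j _ <- | /negPn/eqP ->]; rewrite ?ffunE.
Qed.

Lemma bar_bar_divides (S : fsemigroup) :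
  divides (bar (bar S)) (pow_sg (Sdot S) (bar S)).
Proof.
apply: (@bar_divides_of_realization (bar S) (pow_sg (Sdot S) (bar S))
  {ffun Sdot S -> Sdot S} (fun y t => [ffun x => val (t x) (y x)]) [ffun x => x]
  (fun y g => y == val g)).
- by move=> y t t'; apply/ffunP=> x; rewrite !ffunE.
- by move=> y g g' /eqP-> /eqP/val_inj.
- by move=> g; exists (val g).
- move=> g /eqP g_id h.
  by split; apply: bar_inj => x; rewrite bar_mulE -g_id ffunE.
- move=> g; exists [ffun=> g]; split; first by apply/eqP/ffunP=> x; rewrite !ffunE.
  by move=> y h /eqP->; apply/eqP/ffunP=> x; rewrite !ffunE.
- by move=> y'; exists [ffun x => cst (y' x)] => y; apply/ffunP=> x; rewrite !ffunE.
Qed.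

Lemma rho_divides_sub (S : fsemigroup) : divides_sub S (bar S).
Proof.
exists (@rho S); split=> [s t | s t /(congr1 (fun f : bar S => val f (dot1 S)))].
  by apply: bar_inj => x; rewrite bar_mulE !rhoE ractA.
by rewrite !rhoE !ract_dot1 => /to_dot_inj.
Qed.

Lemma bar_trivial_subsingleton (f g : bar trivial_sg) : f = g.
Proof.
have dot_tt (y : Sdot trivial_sg) : y = to_dot (tt : trivial_sg).
  by case: (Sdot_cases y) => [-> | [[] ->]] //; apply/dot1_to_dot => -[].
by apply: bar_inj => x; rewrite (dot_tt (val f x)) (dot_tt (val g x)).
Qed.

Lemma pseudovariety_bar_preimage (W : sgclass) :
  pseudovariety W -> pseudovariety (fun S => W (bar S)).
Proof.
move=> pW; split=> [ | S T WS WT | S T ST WT | S T ST WT].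
- by apply: (pv_subsingleton pW) => f g; apply: bar_trivial_subsingleton.
- exact: (pv_divides pW (bar_prod_divides S T) (pv_prod pW WS WT)).
- exact: (pv_divides pW (bar_divides (divides_sub_divides ST)) WT).
- exact: (pv_divides pW (bar_divides (hom_image_divides ST)) WT).
Qed.

Lemma pv_bar_bar (V : sgclass) (S : fsemigroup) :
  pseudovariety V -> V (bar S) -> V (bar (bar S)).
Proof. by move=> pV VS; apply: (pv_divides pV (bar_bar_divides S) (pv_pow _ pV VS)). Qed.

Lemma RZ_divides_sub_pow_bar (S R : fsemigroup) :
  1 < #|S| -> RZ R -> divides_sub R (pow_sg R (bar S)).
Proof.
case/card_gt1P=> a [b [_ _ ab]] rzR.
pose y (r u : R) := if u == r then to_dot a else to_dot b.
exists (fun r => [ffun u => cst (y r u)] : pow_sg R (bar S)); split=> [r r' | r r'].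
  by apply/ffunP=> u; rewrite pow_mulE !ffunE mul_cst rzR.
move=> /ffunP/(_ r)/(congr1 (fun f : bar S => val f (dot1 S))).
rewrite !ffunE /y eqxx; case: eqP => // _ /to_dot_inj ab'.
by rewrite ab' eqxx in ab.
Qed.

Lemma barV_bar (V : sgclass) (S : fsemigroup) : V S -> barV V (bar S).
Proof. by move=> VS; apply: csub_gen; exists S. Qed.

Lemma barV_mono (V W : sgclass) : csub V W -> csub (barV V) (barV W).
Proof.
move=> VW; apply: gen_least (pseudovariety_gen _) _.
by move=> _ [S [VS ->]]; apply: barV_bar (VW _ VS).
Qed.

Lemma barV_least (V W : sgclass) :
  pseudovariety W -> (forall S, V S -> W (bar S)) -> csub (barV V) W.
Proof. by move=> pW VW; apply: gen_least => // _ [S [VS ->]]; apply: VW. Qed.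

Lemma barV_gen_least (K W : sgclass) :
  pseudovariety W -> (forall S, K S -> W (bar S)) -> csub (barV (gen K)) W.
Proof.
move=> pW KW; apply: barV_least => // S.
exact: gen_least (pseudovariety_bar_preimage pW) KW S.
Qed.

Lemma csub_barV (V : sgclass) : csub V (barV V).
Proof.
move=> S VS; apply: (pv_sub (pseudovariety_gen _) (rho_divides_sub S)).
exact: barV_bar.
Qed.

Lemma barV_idem (V : sgclass) : ceq (barV (barV V)) (barV V).
Proof.
split; last exact: csub_barV.
apply: barV_gen_least (pseudovariety_gen _) _.
by move=> _ [S [VS ->]]; apply: (pv_bar_bar (pseudovariety_gen _) (barV_bar VS)).
Qed.

Lemma barV_gen1 (S : fsemigroup) : ceq (barV (gen1 S)) (gen1 (bar S)).
Proof.
split; first by apply: barV_gen_least (pseudovariety_gen _) _ => _ ->; apply: csub_gen.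
apply: gen_least (pseudovariety_gen _) _.
by move=> _ ->; apply: barV_bar; apply: csub_gen.
Qed.

Lemma RZ_sub_barV (V : sgclass) : nontrivial V -> csub RZ (barV V).
Proof.
case=> S [VS S_gt1] R rzR.
apply: (pv_sub (pseudovariety_gen _) (RZ_divides_sub_pow_bar S_gt1 rzR)).
exact: (pv_pow _ (pseudovariety_gen _) (barV_bar VS)).
Qed.

Lemma pseudovariety_directed_union (I : Type) (F : I -> sgclass) :
  inhabited I -> (forall i, pseudovariety (F i)) ->
  (forall i j, exists k, csub (F i) (F k) /\ csub (F j) (F k)) ->
  pseudovariety (fun S => exists i, F i S).
Proof.
move=> [i0] pF dirF; split=> [ | S T [i Si] [j Tj] | S T ST [i Ti] | S T ST [i Ti]].
- by exists i0; case: (pF i0).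
- by have [k [ik jk]] := dirF i j; exists k; apply: (pv_prod (pF k) (ik _ Si) (jk _ Tj)).
- by exists i; apply: (pv_sub (pF i) ST Ti).
- by exists i; apply: (pv_hom (pF i) ST Ti).
Qed.

Lemma barV_cjoin_directed (I : Type) (F : I -> sgclass) :
  inhabited I -> (forall i, pseudovariety (F i)) ->
  (forall i j, exists k, csub (F i) (F k) /\ csub (F j) (F k)) ->
  ceq (barV (cjoin F)) (cjoin (fun i => barV (F i))).
Proof.
move=> I0 pF dirF; split.
- apply: barV_least (pseudovariety_gen _) _.
  move=> S /(gen_least (pseudovariety_directed_union I0 pF dirF) (fun _ => id))[i Si].
  by apply: csub_gen; exists i; apply: barV_bar.
- apply: gen_least (pseudovariety_gen _) _.
  by move=> T [i]; apply: barV_mono => S Si; apply: csub_gen; exists i.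
Qed.

Theorem proposition2p5 :
  (* order preserving *)
  (forall V W : sgclass, pseudovariety V -> pseudovariety W ->
     csub V W -> csub (barV V) (barV W)) /\
  (* preserves directed joins *)
  (forall (I : Type) (F : I -> sgclass), inhabited I ->
     (forall i, pseudovariety (F i)) ->
     (forall i j, exists k, csub (F i) (F k) /\ csub (F j) (F k)) ->
     ceq (barV (cjoin F)) (cjoin (fun i => barV (F i)))) /\
  (* non-decreasing *)
  (forall V : sgclass, pseudovariety V -> csub V (barV V)) /\
  (* idempotent *)
  (forall V : sgclass, pseudovariety V -> ceq (barV (barV V)) (barV V)) /\
  (* (i) *)
  (forall S : fsemigroup, ceq (barV (gen1 S)) (gen1 (bar S))) /\
  (* (ii) *)
  (forall V : sgclass, pseudovariety V -> nontrivial V -> csub RZ (barV V)) /\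
  (* consequence *)
  (forall S T : fsemigroup, ceq (gen1 S) (gen1 T) ->
     ceq (gen1 (bar S)) (gen1 (bar T))).
Proof.
split; first by move=> V W _ _; apply: barV_mono.
split; first exact: barV_cjoin_directed.
split; first by move=> V _; apply: csub_barV.
split; first by move=> V _; apply: barV_idem.
split; first exact: barV_gen1.
split; first by move=> V _; apply: RZ_sub_barV.
move=> S T [ST TS]; have [barS1 barS2] := barV_gen1 S; have [barT1 barT2] := barV_gen1 T.
by split=> R; [move/barS2/(barV_mono ST)/barT1 | move/barT2/(barV_mono TS)/barS1].
Qed.
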